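(* Assume that $R,\dot R,\ddot R,\dddot R$ satisfy the bicolored tetrahedron equations for every $\sigma\in\mathbb{Z}/2\mathbb{Z}$ and all spectral parameters, that $\dddot R^{[\sigma]}(r_1,r_2,r_3)$ is invertible for all $\sigma$ and all $r_1,r_2,r_3\in C$, and that for every $\sigma$ and all parameters of two planes $3<4$ (larger than all $1_l$ and $2_m$) the trace reduction $\ddot{\mathbf R}^{[\sigma]}_{34}$ is invertible. Then for all $\sigma\in\mathbb{Z}/2\mathbb{Z}$ and all $r,r'\in C$, $$T^{[\sigma]}(r)\,\dot T^{[\sigma+1]}(r')=\dot T^{[\sigma]}(r')\,T^{[\sigma+1]}(r)$$ as operators on $W=\bigotimes_{l,m}V_{(1_l2_m)}$.
   Context: Let $V$ be a finite-dimensional complex vector space and $C$ a set (of spectral parameters). Let $R,\dot R,\ddot R,\dddot R:\mathbb{Z}/2\mathbb{Z}\times C^3\to\mathrm{End}(V\otimes V\otimes V)$ be maps; write $X^{[\sigma]}(r_1,r_2,r_3)$ for the value of $X\in\{R,\dot R,\ddot R,\dddot R\}$ at $(\sigma,r_1,r_2,r_3)$. Superscript colors $[\sigma]$ are always read modulo 2. Notation: consider a finite totally ordered set of ''planes'', each plane $\alpha$ carrying a parameter $r_\alpha\in C$. For each pair $\alpha<\beta$ let $V_{(\alpha\beta)}$ be a copy of $V$. For $\alpha<\beta<\gamma$, $X^{[\sigma]}_{(\alpha\beta\gamma)}$ denotes the operator on the tensor product of all the spaces $V_{(\cdot\cdot)}$ under consideration that acts as $X^{[\sigma]}(r_\alpha,r_\beta,r_\gamma)$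 on $V_{(\alpha\beta)}\otimes V_{(\alpha\gamma)}\otimes V_{(\beta\gamma)}$ (in this order) and as the identity on all other factors. Bicolored tetrahedron equations (BTE$[\sigma]$): for any four planes $1<2<3<4$ with arbitrary parameters $r_1,r_2,r_3,r_4\in C$, on $V_{(12)}\otimes V_{(13)}\otimes V_{(14)}\otimes V_{(23)}\otimes V_{(24)}\otimes V_{(34)}$, $$R^{[\sigma]}_{(123)}\dot R^{[\sigma+1]}_{(124)}\ddot R^{[\sigma]}_{(134)}\dddot R^{[\sigma+1]}_{(234)}=\dddot R^{[\sigma]}_{(234)}\ddot R^{[\sigma+1]}_{(134)}\dot R^{[\sigma]}_{(124)}R^{[\sigma+1]}_{(123)}.$$ Fix integers $L,M\ge1$, planes $1_1<\dots<1_{2L}<2_1<\dots<2_{2M}$ with fixed arbitrary parameters $r_{1_l},r_{2_m}\in C$. Trace reduction: for planes $\alpha<\beta$ larger than all $1_l$, define $$\mathbf{R}^{[\sigma]}_{\alpha\beta}:=\mathrm{Tr}_{V_{(\alpha\beta)}}\Bigl(R^{[\sigma+1]}_{(1_1\alpha\beta)}R^{[\sigma+2]}_{(1_2\alpha\beta)}\cdots R^{[\sigma+2L]}_{(1_{2L}\alpha\beta)}\Bigr)$$ (partial trace over $V_{(\alpha\beta)}$), an operator on $\bigotimes_l(V_{(1_l\alpha)}\otimes V_{(1_l\beta)})$; $\dot{\mathbf R},\ddot{\mathbf R}$ are defined likewise from $\dot R,\ddot R$. Layer transfer matrix: for $r\in C$, let $3$ be an extra plane larger than all $2_m$ with parameter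 $r_3=r$, and set $$T^{[\sigma]}(r):=\mathrm{Tr}_{\bigotimes_l V_{(1_l3)}}\Bigl(\mathbf R^{[\sigma+1]}_{2_1 3}\,\mathbf R^{[\sigma+2]}_{2_2 3}\cdots\mathbf R^{[\sigma+2M]}_{2_{2M}3}\Bigr),$$ an operator on $W=\bigotimes_{l,m}V_{(1_l2_m)}$ (it depends only on $r$, not on the label of the extra plane). $\dot T^{[\sigma]}(r)$ is defined the same way with $\mathbf R$ replaced by $\dot{\mathbf R}$. *)

From HB Require Import structures.
From mathcomp Require Import all_boot all_order all_algebra.
From mathcomp Require Import reals.
From mathcomp.real_closed Require Import complex.

Set Implicit Arguments.
Unset Strict Implicit.
Unset Printing Implicit Defensive.

Import Order.TTheory GRing.Theory Num.Theory.
Local Open Scope ring_scope.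

(* V = K^d with standard basis 'I_d.  A tensor product of copies of V
   indexed by a finite set of labels S has as basis the configurations
   {ffun S -> 'I_d}; an operator on it is given by its matrix elements. *)
Section Tensor.
Variables (K : fieldType) (d : nat).

Definition config (S : finType) := {ffun S -> 'I_d}.
Definition Op (S : finType) := config S -> config S -> K.

Definition opmul (S : finType) (X Y : Op S) : Op S :=
  fun x y => \sum_(z : config S) X x z * Y z y.
Definition opone (S : finType) : Op S := fun x y => (x == y)%:R.
Definition opinvertible (S : finType) (X : Op S) : Prop :=
  exists Y : Op S, opmul X Y = @opone S /\ opmul Y X = @opone S.

Definition opprod (S : finType) (n : nat) (F : 'I_n -> Op S) : Op S :=
  \big[@opmul S/@opone S]_(i < n) F i.

(* embedding: X acting on the factors f(i) (in the order of S'),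
   identity on all factors not in the image of f *)
Definition emb (S' S : finType) (f : S' -> S) (X : Op S') : Op S :=
  fun x y => X [ffun i => x (f i)] [ffun i => y (f i)]
             * ([forall s, (s \in codom f) || (x s == y s)])%:R.

(* partial trace over all factors of S not in the image of the (injective)
   map g : S' -> S of kept factors; result is an operator on S'. *)
Definition glue (S' S : finType) (g : S' -> S) (u : config S) (y : config S')
  : config S :=
  [ffun s => if [pick s' | g s' == s] is Some s' then y s' else u s].
Definition ptrace (S' S : finType) (g : S' -> S) (X : Op S) : Op S' :=
  fun x y => \sum_(u : config S | [forall s', u (g s') == x s'])
               X u (glue g u y).
End Tensor.

(* Maps Z/2 x C^3 -> End(V (x) V (x) V); the three tensor slots 0,1,2 of
   X(r1,r2,r3) correspond to V_(ab), V_(ac), V_(bc) for planes a<b<c. *)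
Definition RMap (K : fieldType) (d : nat) (C : Type) :=
  'Z_2 -> C -> C -> C -> Op K d 'I_3.

(* Bicolored tetrahedron equations.  Planes 1<2<3<4; the six spaces
   V_(12),V_(13),V_(14),V_(23),V_(24),V_(34) are labelled 0,...,5 of 'I_6. *)
Definition lab (i : nat) : 'I_6 := inord i.
Definition f123 (i : 'I_3) : 'I_6 := lab (nth 0%N [:: 0; 1; 3]%N i).
Definition f124 (i : 'I_3) : 'I_6 := lab (nth 0%N [:: 0; 2; 4]%N i).
Definition f134 (i : 'I_3) : 'I_6 := lab (nth 0%N [:: 1; 2; 5]%N i).
Definition f234 (i : 'I_3) : 'I_6 := lab (nth 0%N [:: 3; 4; 5]%N i).

Definition BTE (K : fieldType) (d : nat) (C : Type)
  (R R1 R2 R3 : RMap K d C) (sigma : 'Z_2) : Prop :=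
  forall r1 r2 r3 r4 : C,
    opmul (opmul (opmul (emb f123 (R sigma r1 r2 r3))
                        (emb f124 (R1 (sigma + 1) r1 r2 r4)))
                 (emb f134 (R2 sigma r1 r3 r4)))
          (emb f234 (R3 (sigma + 1) r2 r3 r4))
  = opmul (opmul (opmul (emb f234 (R3 sigma r2 r3 r4))
                        (emb f134 (R2 (sigma + 1) r1 r3 r4)))
                 (emb f124 (R1 sigma r1 r2 r4)))
          (emb f123 (R (sigma + 1) r1 r2 r3)).

(* Planes 1_1<...<1_{2L} (indexed l : 'I_(2L), plane
   1_{l+1}, parameter r1 l) and two larger planes a<b with parameters ra rb.
   Spaces: Some (l,false) = V_(1_{l+1} a), Some (l,true) = V_(1_{l+1} b),
   None = V_(ab). *)
Definition trlab (L : nat) (l : 'I_(2 * L)) (i : 'I_3) : option ('I_(2 * L) * bool) :=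
  if i == 0 :> nat then Some (l, false)
  else if i == 1 :> nat then Some (l, true) else None.

Definition boldR (K : fieldType) (d : nat) (C : Type) (L : nat)
  (r1 : 'I_(2 * L) -> C) (X : RMap K d C) (sigma : 'Z_2) (ra rb : C)
  : Op K d ('I_(2 * L) * bool)%type :=
  ptrace (@Some _)
    (opprod (fun l : 'I_(2 * L) =>
       emb (trlab l) (X (sigma + (l.+1)%:R) (r1 l) ra rb))).

(* Planes 2_1<...<2_{2M} (m : 'I_(2M), plane
   2_{m+1}, parameter r2 m) and the extra plane 3 with parameter r.
   Spaces: inl (l,m) = V_(1_{l+1} 2_{m+1}), inr l = V_(1_{l+1} 3). *)
Definition tlab (L M : nat) (m : 'I_(2 * M)) (p : 'I_(2 * L) * bool)
  : ('I_(2 * L) * 'I_(2 * M) + 'I_(2 * L))%type :=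
  if p.2 then inr p.1 else inl (p.1, m).

Definition Tlayer (K : fieldType) (d : nat) (C : Type) (L M : nat)
  (r1 : 'I_(2 * L) -> C) (r2 : 'I_(2 * M) -> C) (X : RMap K d C)
  (sigma : 'Z_2) (r : C) : Op K d ('I_(2 * L) * 'I_(2 * M))%type :=
  ptrace (@inl _ _)
    (opprod (fun m : 'I_(2 * M) =>
       emb (@tlab L M m) (boldR r1 X (sigma + (m.+1)%:R) (r2 m) r))).

(* Embed every space V_(ab) into one global tensor product whose factors are
   labelled by pairs of planes.  A partial trace over a set T of factors
   commutes with operators acting away from T and is cyclic for operators
   acting inside T.  Multiplying the bicolored tetrahedron equations for the
   planes 1_l < a < b < c over all l, the R3 factors on V_(ab), V_(ac), V_(bc)
   telescope; since 2L is even, the first and last of them carry the same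
   colour, so after tracing over V_(ab), V_(ac), V_(bc) the conjugation by the
   invertible R3 disappears by cyclicity.  This gives a Yang-Baxter type
   equation for the trace reductions boldR.  The same argument one level up,
   with the invertible reduction of R2 in the role of R3 and the trace over
   the V_(1_l 3), V_(1_l 4), yields the commutation of the transfer matrices. *)
From Stdlib Require Import FunctionalExtensionality.
From Pilot Require Import Defs.
From HB Require Import structures.
From mathcomp Require Import all_boot all_order all_algebra.
From mathcomp Require Import reals.
From mathcomp.real_closed Require Import complex.
Set Implicit Arguments.
Unset Strict Implicit.
Unset Printing Implicit Defensive.
Import GRing.Theory.
Local Open Scope ring_scope.

Section OpAlgebra.
Variables (K : fieldType) (d : nat) (S : finType).
Local Notation Op := (Op K d S).
Local Notation "X ** Y" := (@opmul K d S X Y) (at level 40, left associativity).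

Lemma op_ext (X Y : Op) : (forall x y, X x y = Y x y) -> X = Y.
Proof. by move=> H; do 2 (apply: functional_extensionality => ?); apply: H. Qed.

Lemma mulopA : associative (@opmul K d S).
Proof.
move=> X Y Z; apply: op_ext => x y; rewrite /opmul.
under [RHS]eq_bigr => z _ do rewrite big_distrl /=.
rewrite exchange_big /=; apply: eq_bigr => w _.
by rewrite big_distrr /=; apply: eq_bigr => z _; rewrite mulrA.
Qed.

Lemma mul1op : left_id (@opone K d S) (@opmul K d S).
Proof.
move=> X; apply: op_ext => x y; rewrite /opmul /opone.
rewrite (bigD1 x) //= eqxx mul1r big1 ?addr0 // => z /negbTE.
by rewrite eq_sym => ->; rewrite mul0r.
Qed.

Lemma mulop1 : right_id (@opone K d S) (@opmul K d S).
Proof.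
move=> X; apply: op_ext => x y; rewrite /opmul /opone.
rewrite (bigD1 y) //= eqxx mulr1 big1 ?addr0 // => z /negbTE ->.
by rewrite mulr0.
Qed.

HB.instance Definition _ :=
  Monoid.isLaw.Build Op (@opone K d S) (@opmul K d S) mulopA mul1op mulop1.

Lemma commute_mulop X Y Z : X ** Z = Z ** X -> Y ** Z = Z ** Y ->
  X ** Y ** Z = Z ** (X ** Y).
Proof. by move=> XZ YZ; rewrite -mulopA YZ mulopA XZ mulopA. Qed.

Lemma opprod_commute n (F : 'I_n -> Op) X : (forall i, X ** F i = F i ** X) ->
  X ** opprod F = opprod F ** X.
Proof.
move=> H; rewrite /opprod; elim/big_rec: _ => [|i p _ IH].
  by rewrite mul1op mulop1.
by rewrite mulopA H -mulopA IH mulopA.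
Qed.

Lemma opprod_telescope n (X Y : 'I_n -> Op) (D : nat -> Op) :
  (forall i : 'I_n, X i ** D i.+1 = D i ** Y i) ->
  opprod X ** D n = D 0%N ** opprod Y.
Proof.
rewrite /opprod; elim: n X Y => [|n IH] X Y H; first by rewrite !big_ord0 mul1op mulop1.
rewrite !big_ord_recr /= -mulopA (H ord_max) mulopA (IH _ (fun i => Y (widen_ord _ i))).
  by rewrite mulopA.
by move=> i; rewrite H.
Qed.

Lemma opprodM n (A B : 'I_n -> Op) :
  (forall i j : 'I_n, (i < j)%N -> A j ** B i = B i ** A j) ->
  opprod A ** opprod B = opprod (fun i => A i ** B i).
Proof.
rewrite /opprod; elim: n A B => [|n IH] A B H; first by rewrite !big_ord0 mul1op.
rewrite !big_ord_recr /= -(IH (fun i => A (widen_ord _ i)) (fun i => B (widen_ord _ i)));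
  last by move=> i j Hij; apply: H.
set PB := \big[_/_]_(i < n) B _.
have HAB : A ord_max ** PB = PB ** A ord_max.
  by apply: opprod_commute => i; apply: H; rewrite /= ltn_ord.
by rewrite -!mulopA (mulopA (A ord_max)) HAB -mulopA.
Qed.

End OpAlgebra.

Section Configurations.
Variables (d : nat) (S : finType).
Local Notation config := (config d S).
Implicit Types (A B : {set S}) (x y z w : config).

Definition eqon A x y : bool := [forall s in A, x s == y s].
Definition patch A x z : config := [ffun s => if s \in A then x s else z s].

Lemma eqonP A x y : reflect (forall s, s \in A -> x s = y s) (eqon A x y).
Proof.
apply: (iffP forallP) => H s; last by apply/implyP => /H ->.
by move=> sA; move: (H s); rewrite sA => /eqP.
Qed.

Lemma eqon_refl A x : eqon A x x.
Proof. by apply/eqonP. Qed.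

Lemma eqon_sym A x y : eqon A x y = eqon A y x.
Proof. by apply/eqonP/eqonP => H s /H. Qed.

Lemma eqon_trans A x y z : eqon A x y -> eqon A y z -> eqon A x z.
Proof. by move=> /eqonP H1 /eqonP H2; apply/eqonP => s Hs; rewrite H1 ?H2. Qed.

Lemma eqon_transl A x x' y : eqon A x x' -> eqon A x y = eqon A x' y.
Proof.
move=> H; apply/idP/idP => H'; apply: eqon_trans H' => //.
by rewrite eqon_sym.
Qed.

Lemma eqon_transr A x y y' : eqon A y y' -> eqon A x y = eqon A x y'.
Proof. by move=> H; rewrite eqon_sym (eqon_transl _ H) eqon_sym. Qed.

Lemma eqonU A B x y : eqon (A :|: B) x y = eqon A x y && eqon B x y.
Proof.
apply/eqonP/andP => [H|[/eqonP H1 /eqonP H2] s].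
  by split; apply/eqonP => s Hs; apply: H; rewrite inE Hs ?orbT.
by rewrite inE => /orP[/H1|/H2].
Qed.

Lemma eqon_split A x y : (x == y) = eqon A x y && eqon (~: A) x y.
Proof.
rewrite -eqonU setUCr; apply/eqP/eqonP => [-> //|H].
by apply/ffunP => s; apply: H.
Qed.

Lemma patchE A x z s : patch A x z s = if s \in A then x s else z s.
Proof. by rewrite ffunE. Qed.

Lemma patch_eqon A x z : eqon A (patch A x z) x.
Proof. by apply/eqonP => s Hs; rewrite patchE Hs. Qed.

Lemma patch_eqonC A x z : eqon (~: A) (patch A x z) z.
Proof. by apply/eqonP => s; rewrite inE patchE => /negbTE ->. Qed.

Lemma eq_patch A x z x' z' :
  eqon A x x' -> eqon (~: A) z z' -> patch A x z = patch A x' z'.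
Proof.
move=> /eqonP H1 /eqonP H2; apply/ffunP => s; rewrite !patchE; case: ifP => Hs.
  exact: H1.
by apply: H2; rewrite inE Hs.
Qed.

Lemma patch_eqonD A B x z : {in B, forall s, s \notin A} -> eqon B (patch A x z) z.
Proof. by move=> BA; apply/eqonP => s /BA nA; rewrite patchE (negbTE nA). Qed.

Lemma patchK A x y z : patch A (patch A x y) z = patch A x z.
Proof. by apply/ffunP => s; rewrite !ffunE; case: (s \in A). Qed.

Lemma sum_eqon_patch (K : nmodType) A x x' (F : config -> K) :
  \sum_(w | eqon (~: A) w x) F w = \sum_(w | eqon (~: A) w x') F (patch A w x).
Proof.
rewrite (reindex_onto (fun w => patch A w x) (fun w => patch A w x')).
  apply: eq_bigl => w; rewrite patch_eqonC /=.
  apply/eqP/idP => [<-|/eqonP H]; first exact: patch_eqonC.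
  apply/ffunP => s; rewrite !patchE; case Hs: (s \in A) => //.
  by rewrite H // inE Hs.
move=> w /eqonP H; apply/ffunP => s; rewrite !patchE; case Hs: (s \in A) => //.
by rewrite H // inE Hs.
Qed.

Lemma sum_collapse (K : nmodType) (I : finType) (P : pred I) (F : I -> K) i0 :
  P i0 -> (forall i, P i -> i != i0 -> F i = 0) -> \sum_(i | P i) F i = F i0.
Proof.
move=> P0 H; rewrite (bigD1 i0) //= big1 ?addr0 // => i /andP [Pi ni].
exact: H.
Qed.

End Configurations.

Section Extension.
Variables (d : nat) (S' S : finType) (f : S' -> S).
Local Notation config := (config d).
Hypothesis f_inj : injective f.

Definition codomset : {set S} := [set t | t \in codom f].

Definition extend (x : config S) (u : config S') : config S :=
  [ffun t => if [pick s | f s == t] is Some s then u s else x t].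

Lemma codomsetP t : reflect (exists s, t = f s) (t \in codomset).
Proof. by rewrite inE; apply: (iffP codomP) => [[s ->]|[s ->]]; exists s. Qed.

Lemma codomset_f s : f s \in codomset.
Proof. by apply/codomsetP; exists s. Qed.

Lemma extendK x u : [ffun s => extend x u (f s)] = u.
Proof.
apply/ffunP => s; rewrite !ffunE.
case: pickP => [s' /eqP /f_inj -> //|H].
by move: (H s); rewrite eqxx.
Qed.

Lemma extend_eqonC x u : eqon (~: codomset) (extend x u) x.
Proof.
apply/eqonP => t; rewrite !inE => Ht; rewrite ffunE; case: pickP => // s /eqP E.
by move: Ht; rewrite -E codom_f.
Qed.

Lemma sum_eqon_extend (K : nmodType) x (F : config S -> K) :
  \sum_(w | eqon (~: codomset) w x) F w = \sum_(u : config S') F (extend x u).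
Proof.
rewrite (reindex_onto (extend x) (fun w : config S => [ffun s => w (f s)])).
  by apply: eq_bigl => u; rewrite extend_eqonC extendK // eqxx.
move=> w /eqonP Hw; apply/ffunP => t; rewrite ffunE.
case: pickP => [s /eqP <-|H]; first by rewrite ffunE.
rewrite Hw // inE; apply/negP => /codomsetP [s Es].
by move: (H s); rewrite Es eqxx.
Qed.

End Extension.

Section Embedding.
Variables (K : fieldType) (d : nat).
Local Notation Op := (Op K d).
Local Notation config := (config d).

Lemma embE (S' S : finType) (f : S' -> S) (X : Op S') x y :
  emb f X x y =
  X [ffun i => x (f i)] [ffun i => y (f i)] * (eqon (~: codomset f) x y)%:R.
Proof.
rewrite /emb; congr (_ * (nat_of_bool _)%:R).
apply/forallP/eqonP => [H s|H s].
  by rewrite !inE => Hs; move: (H s); rewrite (negbTE Hs) => /eqP.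
by case Hs: (s \in codom f) => //=; apply/eqP/H; rewrite !inE Hs.
Qed.

Lemma eq_emb (S' S : finType) (f g : S' -> S) (X : Op S') :
  f =1 g -> emb f X = emb g X.
Proof. by move=> /functional_extensionality ->. Qed.

Lemma embM (S' S : finType) (f : S' -> S) (X Y : Op S') : injective f ->
  emb f (opmul X Y) = opmul (emb f X) (emb f Y).
Proof.
move=> fI; apply: op_ext => x y; rewrite embE /opmul.
under [RHS]eq_bigr do rewrite !embE.
rewrite (bigID (fun z => eqon (~: codomset f) z x)) /=.
rewrite [X in _ + X]big1 ?addr0; last first.
  by move=> z Hz; rewrite eqon_sym (negbTE Hz) mulr0 mul0r.
rewrite sum_eqon_extend // big_distrl /=; apply: eq_bigr => u _.
rewrite extendK // [eqon _ x (extend _ _ _)]eqon_sym extend_eqonC mulr1.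
by rewrite (eqon_transl _ (extend_eqonC f x u)) mulrA.
Qed.

Lemma emb1 (S' S : finType) (f : S' -> S) : emb f (@opone K d S') = @opone K d S.
Proof.
apply: op_ext => x y; rewrite embE /opone -natrM mulnb.
congr ((nat_of_bool _)%:R); rewrite (eqon_split (codomset f)); congr (_ && _).
apply/eqP/eqonP => [E t /codomsetP [i ->]|H].
  by move/ffunP: E => /(_ i); rewrite !ffunE.
by apply/ffunP => i; rewrite !ffunE; apply/H/codomset_f.
Qed.

Lemma emb_prod (S' S : finType) (f : S' -> S) n (F : 'I_n -> Op S') :
  injective f -> emb f (opprod F) = opprod (fun i => emb f (F i)).
Proof.
move=> fI; apply: (big_morph (emb f)) => [X Y|]; [exact: embM | exact: emb1].
Qed.

Lemma emb_comp (S'' S' S : finType) (g : S' -> S) (f : S'' -> S') (X : Op S'') :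
  injective g -> emb g (emb f X) = emb (g \o f) X.
Proof.
move=> gI; apply: op_ext => x y; rewrite !embE -mulrA -natrM mulnb.
have Ecomp z : [ffun i => [ffun j => z (g j)] (f i)] = [ffun i => z ((g \o f) i)] :> config S''.
  by apply/ffunP => i; rewrite !ffunE.
rewrite !Ecomp.
congr (_ * (nat_of_bool _)%:R).
apply/andP/eqonP => [[/eqonP H1 /eqonP H2] s|H].
  rewrite inE => Hs; case: (boolP (s \in codomset g)) => Hg; last first.
    by apply: H2; rewrite inE.
  move: Hg => /codomsetP [t Et]; subst s.
  have := H1 t; rewrite !ffunE; apply; rewrite inE; apply/negP; case/codomsetP => u Eu.
  by move: Hs; rewrite Eu (codomset_f (g \o f)).
split; apply/eqonP => s; rewrite inE => Hs.
  rewrite !ffunE; apply: H; rewrite inE; apply/negP; case/codomsetP => u /= /gI Eu.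
  by move: Hs; rewrite Eu codomset_f.
apply: H; rewrite inE; apply/negP; case/codomsetP => u Eu.
by move: Hs; rewrite Eu /= codomset_f.
Qed.

Lemma emb_inj (S' S : finType) (f : S' -> S) (s0 : S') (X Y : Op S') :
  injective f -> emb f X = emb f Y -> X = Y.
Proof.
move=> fI E; apply: op_ext => a b.
pose c : config S := [ffun _ => a s0].
suff H : forall Z : Op S', Z a b = emb f Z (extend f c a) (extend f c b).
  by rewrite H E -H.
move=> Z; rewrite embE !extendK // (_ : eqon _ _ _) ?mulr1 //.
by apply: eqon_trans (extend_eqonC f c a) _; rewrite eqon_sym extend_eqonC.
Qed.

Lemma emb_invertible (S' S : finType) (f : S' -> S) (X : Op S') :
  injective f -> opinvertible X -> opinvertible (emb f X).
Proof.
move=> fI [Y [XY YX]]; exists (emb f Y).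
by rewrite -!embM // XY YX emb1.
Qed.

End Embedding.

(* [X] acts as the identity on the factors outside A. *)
Definition supported (K : fieldType) (d : nat) (S : finType) (A : {set S})
  (X : Op K d S) : Prop :=
  forall x y z, X x y = (eqon (~: A) x y)%:R * X (patch A x z) (patch A y z).

Section Support.
Variables (K : fieldType) (d : nat) (S : finType).
Local Notation Op := (Op K d S).
Local Notation config := (config d S).
Implicit Types (A B : {set S}) (X Y : Op) (x y z : config).

Lemma supported_eq A X x y x' y' : supported A X ->
  eqon A x x' -> eqon A y y' -> eqon (~: A) x y = eqon (~: A) x' y' ->
  X x y = X x' y'.
Proof.
move=> sX Hx Hy Hb; rewrite (sX x y x) (sX x' y' x) Hb.
by rewrite (@eq_patch _ _ A x x x' x) ?eqon_refl // (@eq_patch _ _ A y x y' x) ?eqon_refl.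
Qed.

Lemma supported_zero A X x y : supported A X -> ~~ eqon (~: A) x y -> X x y = 0.
Proof. by move=> sX H; rewrite (sX x y x) (negbTE H) mul0r. Qed.

Lemma supported_emb (S' : finType) (f : S' -> S) (X' : Defs.Op K d S') A :
  (forall i, f i \in A) -> supported A (emb f X').
Proof.
move=> HA x y z; rewrite !embE.
have Ef w : [ffun i => patch A w z (f i)] = [ffun i => w (f i)].
  by apply/ffunP => i; rewrite !ffunE HA.
rewrite !Ef mulrCA -natrM mulnb; congr (_ * (nat_of_bool _)%:R).
apply/eqonP/andP => [H|[/eqonP H1 /eqonP H2] s Hs].
  split; apply/eqonP => s Hs.
    apply: H; rewrite !inE; apply/negP => Hc; move: Hs; rewrite !inE.
    by case/codomP: Hc => [i ->]; rewrite HA.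
  by rewrite !patchE; case: ifP => // HsA; apply: H.
case: (boolP (s \in A)) => HsA; first by move: (H2 s Hs); rewrite !patchE HsA.
by apply: H1; rewrite inE HsA.
Qed.

Lemma supported1 A : supported A (@opone K d S).
Proof.
move=> x y z; rewrite /opone -natrM mulnb; congr (nat_of_bool _)%:R.
rewrite (eqon_split A) andbC; congr (_ && _).
apply/idP/eqP => [H|E]; first by apply: eq_patch => //; apply: eqon_refl.
by rewrite -(eqon_transl _ (patch_eqon A x z)) E; apply: patch_eqon.
Qed.

Lemma supportedM A X Y : supported A X -> supported A Y -> supported A (opmul X Y).
Proof.
move=> sX sY x y z; rewrite /opmul.
case: (boolP (eqon (~: A) x y)) => Hxy; last first.
  rewrite mul0r big1 // => w _.
  case: (boolP (eqon (~: A) x w)) => Hxw; last by rewrite (supported_zero sX Hxw) mul0r.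
  rewrite (supported_zero sY) ?mulr0 //; apply: contra Hxy => Hwy.
  exact: eqon_trans Hxw Hwy.
rewrite mul1r (bigID (fun w => eqon (~: A) w x)) /= [X in _ + X]big1 ?addr0; last first.
  by move=> w Hw; rewrite (supported_zero sX) ?mul0r // eqon_sym.
rewrite [RHS](bigID (fun w => eqon (~: A) w z)) /= [X in _ + X]big1 ?addr0; last first.
  move=> w Hw; rewrite (supported_zero sX) ?mul0r // eqon_sym.
  by apply: contra Hw => Hw; apply: eqon_trans Hw (patch_eqonC _ _ _).
rewrite (sum_eqon_patch _ _ z); apply: eq_bigr => w Hw; congr (_ * _).
  apply: (supported_eq sX); [by rewrite eqon_sym patch_eqon | by rewrite patch_eqon |].
  rewrite (eqon_transr _ (patch_eqonC A w x)) eqon_refl.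
  by rewrite (eqon_transl _ (patch_eqonC A x z)) eqon_sym Hw.
apply: (supported_eq sY); [by rewrite patch_eqon | by rewrite eqon_sym patch_eqon |].
rewrite (eqon_transl _ (patch_eqonC A w x)) Hxy.
by rewrite (eqon_transr _ (patch_eqonC A y z)) Hw.
Qed.

Lemma supported_prod A n (F : 'I_n -> Op) :
  (forall i, supported A (F i)) -> supported A (opprod F).
Proof.
by move=> H; apply: (big_ind (supported A)) => //; [apply: supported1 | apply: supportedM].
Qed.

(* With disjoint supports, the only intermediate configuration contributing
   to (XY)(x,y) is x with its A-part replaced by that of y. *)
Lemma opmul_disjoint A B X Y x y : supported A X -> supported B Y ->
  {in A, forall s, s \notin B} ->
  opmul X Y x y =
  (eqon (~: (A :|: B)) x y)%:R * (X x (patch A y x) * Y (patch A y x) y).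
Proof.
move=> sX sY AB; rewrite /opmul.
have nonzero z : X x z * Y z y != 0 -> eqon (~: A) x z && eqon (~: B) z y.
  apply: contraR; case/nandP => H; first by rewrite (supported_zero sX H) mul0r.
  by rewrite (supported_zero sY H) mulr0.
case: (boolP (eqon (~: (A :|: B)) x y)) => Hxy; last first.
  rewrite mul0r big1 // => z _; apply/eqP; apply: contraR Hxy.
  move=> /nonzero /andP [/eqonP H1 /eqonP H2]; apply/eqonP => s.
  by rewrite !inE negb_or => /andP [nA nB]; rewrite H1 ?H2 // inE.
rewrite mul1r (sum_collapse (P := xpredT) (i0 := patch A y x)) // => z _.
apply: contraNeq => /nonzero /andP [/eqonP H1 /eqonP H2].
apply/eqP/ffunP => s; rewrite patchE; case: ifP => Hs.
  by rewrite H2 // inE AB.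
by rewrite H1 // inE Hs.
Qed.

Lemma patch_eqonCU A B x y :
  eqon (~: (A :|: B)) x y -> eqon (~: B) (patch A y x) y.
Proof.
move=> /eqonP Hxy; apply/eqonP => s; rewrite inE => nB; rewrite patchE.
by case: ifP => // nA; rewrite Hxy // !inE negb_or nA.
Qed.

Lemma commute_supported A B X Y : supported A X -> supported B Y ->
  {in A, forall s, s \notin B} -> opmul X Y = opmul Y X.
Proof.
move=> sX sY AB; have BA : {in B, forall s, s \notin A}.
  by move=> s Bs; apply: contraL Bs; apply: AB.
apply: op_ext => x y; rewrite (opmul_disjoint _ _ sX sY AB).
rewrite (opmul_disjoint _ _ sY sX BA) [B :|: A]setUC.
case: (boolP (eqon _ x y)) => [Hxy|]; last by rewrite !mul0r.
congr (_ * _); rewrite mulrC; congr (_ * _).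
  apply: (supported_eq sY); first by rewrite patch_eqonD.
    by rewrite eqon_sym patch_eqon.
  by rewrite patch_eqonCU // eqon_sym patch_eqonC.
apply: (supported_eq sX); first by rewrite eqon_sym patch_eqonD.
  by rewrite patch_eqon.
by rewrite eqon_sym patch_eqonC patch_eqonCU // setUC.
Qed.

End Support.

(* The partial trace over the factors in T, tensored with the identity on T. *)
Definition trace_on (K : fieldType) (d : nat) (S : finType) (T : {set S})
  (X : Op K d S) : Op K d S :=
  fun x y => (eqon T x y)%:R * \sum_(u | eqon (~: T) u x) X u (patch T u y).

Section PartialTrace.
Variables (K : fieldType) (d : nat) (S : finType).
Local Notation Op := (Op K d S).
Local Notation config := (config d S).
Implicit Types (A T U : {set S}) (X Y Z D : Op) (x y z : config).

Lemma sum_supported_off A T X x z (F : config -> K) :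
  supported A X -> {in A, forall s, s \notin T} ->
  \sum_(u | eqon (~: T) u x) X u z * F u = X x (patch T x z) * F (patch T z x).
Proof.
move=> sX AT; have TA s : s \in T -> s \in ~: A.
  by move=> Ts; rewrite inE; apply: contraL Ts; apply: AT.
rewrite (sum_collapse (i0 := patch T z x)); last first.
- move=> u Hu nu.
  case: (boolP (eqon (~: A) u z)) => H1; last by rewrite (supported_zero sX H1) mul0r.
  case/negP: nu; apply/eqP/ffunP => s; rewrite patchE; case: ifP => Hs.
    by move/eqonP: H1 => ->; rewrite // TA.
  by move/eqonP: Hu => ->; rewrite // inE Hs.
- exact: patch_eqonC.
congr (_ * _); apply: (supported_eq sX).
- exact: patch_eqonD.
- by rewrite eqon_sym patch_eqonD.
- by apply/idP/idP => /eqonP H; apply/eqonP => s Hs; move: (H s Hs); rewrite !patchE; case: ifP.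
Qed.

Lemma trace_onMl T A X Y : supported A X -> {in A, forall s, s \notin T} ->
  trace_on T (opmul X Y) = opmul X (trace_on T Y).
Proof.
move=> sX AT; apply: op_ext => x y; rewrite /trace_on /opmul.
have TA s : s \in T -> s \in ~: A.
  by move=> Ts; rewrite inE; apply: contraL Ts; apply: AT.
have eqonT_off z : eqon (~: A) x z -> eqon T z y = eqon T x y.
  by move=> /eqonP H; apply: eqon_transl; apply/eqonP => s /TA /H ->.
case: (boolP (eqon T x y)) => Hxy; last first.
  rewrite mul0r; symmetry; apply: big1 => z _.
  case: (boolP (eqon (~:A) x z)) => H1; last by rewrite (supported_zero sX H1) mul0r.
  by rewrite eqonT_off // (negbTE Hxy) mul0r mulr0.
rewrite mul1r exchange_big /=.
under eq_bigr => z _ do rewrite (sum_supported_off _ _ _ sX AT) patchK.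
transitivity (\sum_z \sum_(v | eqon (~:T) v z) X x z * Y v (patch T v y)); last first.
  apply: eq_bigr => z _.
  case: (boolP (eqon (~:A) x z)) => H1; last first.
    by rewrite (supported_zero sX H1) mul0r big1 // => v _; rewrite mul0r.
  by rewrite eqonT_off // Hxy mul1r big_distrr.
rewrite (exchange_big_dep xpredT) //=; apply: eq_bigr => v _.
rewrite -big_distrl /= (sum_collapse (i0 := patch T x v)) ?(eqon_sym _ v) ?patch_eqonC //.
move=> z Hz nz; case: (boolP (eqon (~:A) x z)) => H1; last first.
  by rewrite (supported_zero sX H1).
case/negP: nz; apply/eqP/ffunP => s; rewrite patchE; case: ifP => Hs.
  by move/eqonP: H1 => ->; rewrite // TA.
by move/eqonP: Hz => ->; rewrite // inE Hs.
Qed.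

Lemma trace_onMr T A X Y : supported A X -> {in A, forall s, s \notin T} ->
  trace_on T (opmul Y X) = opmul (trace_on T Y) X.
Proof.
move=> sX AT; apply: op_ext => x y; rewrite /trace_on /opmul.
have TA s : s \in T -> s \in ~: A.
  by move=> Ts; rewrite inE; apply: contraL Ts; apply: AT.
case: (boolP (eqon T x y)) => Hxy; last first.
  rewrite mul0r; symmetry; apply: big1 => z _.
  case: (boolP (eqon (~:A) z y)) => H1; last by rewrite (supported_zero sX H1) mulr0.
  have -> : eqon T x z = false.
    apply/negP => Hxz; case/negP: Hxy; apply: eqon_trans Hxz _.
    by move/eqonP: H1 => H1; apply/eqonP => s /TA /H1.
  by rewrite !mul0r.
rewrite mul1r.
have Einner u : eqon (~:T) u x -> \sum_z Y u z * X z (patch T u y)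
    = \sum_(w | eqon T w x) Y u (patch T u w) * X w y.
  move=> Hu; rewrite (bigID (fun z => eqon T z u)) /= [X in _ + X]big1 ?addr0; last first.
    move=> z Hz; rewrite (supported_zero sX) ?mulr0 //; apply: contra Hz => /eqonP H.
    by apply/eqonP => s Hs; move: (H s (TA s Hs)); rewrite patchE Hs.
  have := sum_eqon_patch (~: T) u x (fun w => Y u w * X w (patch T u y)).
  rewrite setCK => ->; apply: eq_bigr => w Hw.
  have -> : patch (~: T) w u = patch T u w.
    by apply/ffunP => s; rewrite !patchE inE; case: (s \in T).
  have Hwy : eqon T w y by apply: eqon_trans Hw Hxy.
  congr (_ * _); apply: (supported_eq sX).
  - exact: patch_eqonD.
  - exact: patch_eqonD.
  - apply/idP/idP => /eqonP H; apply/eqonP => s Hs; move: (H s Hs); rewrite !patchE;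
      case: ifP => HsT // _; by move/eqonP: Hwy => ->.
rewrite (eq_bigr _ (fun u Hu => Einner u Hu)).
rewrite [RHS](bigID (fun z => eqon T z x)) /= [X in _ + X]big1 ?addr0; last first.
  by move=> z Hz; rewrite eqon_sym (negbTE Hz) !mul0r.
rewrite exchange_big /=; apply: eq_bigr => w Hw.
by rewrite eqon_sym Hw mul1r big_distrl.
Qed.

Lemma trace_on_cyc T D Y : supported T D ->
  trace_on T (opmul D Y) = trace_on T (opmul Y D).
Proof.
move=> sD; apply: op_ext => x y; rewrite /trace_on /opmul; congr (_ * _).
transitivity (\sum_(u | eqon (~:T) u x) \sum_(z | eqon (~:T) z x)
    D u z * Y z (patch T u y)).
  apply: eq_bigr => u Hu.
  rewrite (bigID (fun z => eqon (~:T) z x)) /= [X in _ + X]big1 ?addr0 // => z Hz.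
  rewrite (supported_zero sD) ?mul0r //; apply: contra Hz => Huz.
  by rewrite eqon_sym in Huz; apply: eqon_trans Huz Hu.
transitivity (\sum_(u | eqon (~:T) u x) \sum_(z | eqon (~:T) z x)
   Y u (patch T z y) * D (patch T z y) (patch T u y)); last first.
  apply: eq_bigr => u Hu.
  rewrite [RHS](bigID (fun z => eqon (~:T) z y)) /= [X in _ + X]big1 ?addr0; last first.
    move=> z Hz; rewrite (supported_zero sD) ?mulr0 //; apply: contra Hz => H.
    by apply: eqon_trans H _; apply: patch_eqonC.
  by rewrite (sum_eqon_patch T y x).
rewrite [RHS]exchange_big /=; apply: eq_bigr => u Hu; apply: eq_bigr => z Hz.
rewrite mulrC; congr (_ * _); apply: (supported_eq sD).
- by rewrite eqon_sym patch_eqon.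
- by rewrite eqon_sym patch_eqon.
rewrite (eqon_transl _ (patch_eqonC T u y)) (eqon_transr _ (patch_eqonC T z y)).
by rewrite eqon_refl; apply: eqon_trans Hu _; rewrite eqon_sym.
Qed.

Lemma trace_on_comp (T1 T2 : {set S}) Z : {in T1, forall s, s \notin T2} ->
  trace_on T1 (trace_on T2 Z) = trace_on (T1 :|: T2) Z.
Proof.
move=> D12; apply: op_ext => x y; rewrite /trace_on eqonU.
have T2n1 s : s \in T2 -> (s \in T1) = false.
  by move=> Hs; apply/negP => /D12; rewrite Hs.
have T21 s : s \in T2 -> s \in ~: T1 by move=> /T2n1; rewrite inE => ->.
have E0 u : eqon (~:T1) u x -> eqon T2 u (patch T1 u y) = eqon T2 x y.
  move=> /eqonP Hu; apply/eqonP/eqonP => H s Hs; move: (H s Hs);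
  by rewrite patchE (T2n1 s Hs) Hu ?T21.
case: (boolP (eqon T1 x y && eqon T2 x y)) => Hb; last first.
  rewrite mul0r; case: (boolP (eqon T1 x y)) => H1; last by rewrite mul0r.
  rewrite mul1r big1 // => u Hu; rewrite E0 //.
  by move: Hb; rewrite H1 /= => /negbTE ->; rewrite mul0r.
case/andP: Hb => H1 H2; rewrite H1 /= !mul1r.
transitivity (\sum_(u | eqon (~:T1) u x) \sum_(w | eqon (~:T2) w u)
    Z w (patch (T1 :|: T2) w y)).
  apply: eq_bigr => u Hu; rewrite E0 // H2 mul1r; apply: eq_bigr => w /eqonP Hw.
  congr (Z w _); apply/ffunP => s; rewrite !patchE !inE.
  case: (boolP (s \in T2)) => HT2; first by rewrite orbT.
  by rewrite orbF; case: ifP => // HT1; rewrite Hw // inE HT2.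
rewrite (exchange_big_dep xpredT) //= [RHS]big_mkcond /=; apply: eq_bigr => w _.
case: ifP => Hw.
  rewrite (sum_collapse (i0 := patch T1 w x)) //.
    apply/andP; split; first exact: patch_eqonC.
    apply/eqonP => s Hs; rewrite patchE; case: ifP => // HT1.
    by move/eqonP: Hw => ->; rewrite // !inE negb_or HT1; move: Hs; rewrite inE.
  move=> u /andP [/eqonP Hu /eqonP Hwu]; apply: contraNeq => _; apply/eqP/ffunP => s.
  rewrite patchE; case: ifP => HT1; last by rewrite Hu // inE HT1.
  by rewrite Hwu // inE; apply/negP => HT2; rewrite (T2n1 s HT2) in HT1.
rewrite big1 // => u /andP [/eqonP Hu /eqonP Hwu]; case/negP: Hw.
apply/eqonP => s; rewrite !inE negb_or => /andP [n1 n2].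
by rewrite Hwu ?Hu // inE.
Qed.

Lemma trace_onM (T1 T2 : {set S}) X Y : {in T1, forall s, s \notin T2} ->
  supported (~: T2) X -> supported (~: T1) (trace_on T2 Y) ->
  trace_on (T1 :|: T2) (opmul X Y) = opmul (trace_on T1 X) (trace_on T2 Y).
Proof.
move=> D12 sX sY; rewrite -trace_on_comp // (trace_onMl Y sX); last first.
  by move=> s; rewrite inE.
by rewrite (trace_onMr X sY) // => s; rewrite inE.
Qed.

Lemma trace_on_conj U n (X Y : 'I_n -> Op) (D : nat -> Op) :
  (forall i : 'I_n, opmul (X i) (D i.+1) = opmul (D i) (Y i)) ->
  D n = D 0%N -> supported U (D 0%N) -> opinvertible (D 0%N) ->
  trace_on U (opprod X) = trace_on U (opprod Y).
Proof.
move=> H Dn sD [E [DE ED]].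
have T := opprod_telescope H; rewrite Dn in T.
have -> : opprod X = opmul (D 0%N) (opmul (opprod Y) E).
  by rewrite mulopA -T -mulopA DE mulop1.
by rewrite trace_on_cyc // -mulopA ED mulop1.
Qed.

Lemma trace_on_prodM (T1 T2 : {set S}) n (A B : 'I_n -> Op) : T1 \subset ~: T2 ->
  (forall i, supported (~: T2) (A i)) -> supported (~: T1) (trace_on T2 (opprod B)) ->
  (forall i j : 'I_n, (i < j)%N -> opmul (A j) (B i) = opmul (B i) (A j)) ->
  opmul (trace_on T1 (opprod A)) (trace_on T2 (opprod B)) =
  trace_on (T1 :|: T2) (opprod (fun i => opmul (A i) (B i))).
Proof.
move=> /subsetP T12 sA sB AB; rewrite -trace_onM ?opprodM //; last exact: supported_prod.
by move=> s /T12; rewrite inE.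
Qed.

Lemma supported_trace_on A T Y : T \subset A -> supported A Y ->
  supported A (trace_on T Y).
Proof.
move=> /subsetP TA sY x y z; rewrite /trace_on.
have CA s : s \in ~: A -> s \in ~: T by rewrite !inE; apply: contra => /TA.
have -> : eqon T (patch A x z) (patch A y z) = eqon T x y.
  by apply/eqonP/eqonP => H s Ts; move: (H s Ts); rewrite !patchE TA.
rewrite mulrCA; congr (_ * _).
case: (boolP (eqon (~: A) x y)) => [/eqonP Hxy|Hxy]; last first.
  rewrite mul0r big1 // => u /eqonP Hu; apply: (supported_zero sY); apply: contra Hxy.
  move=> /eqonP H; apply/eqonP => s nA.
  by rewrite -Hu ?CA // H // patchE; move: (CA s nA); rewrite inE => /negbTE ->.
rewrite mul1r [RHS](reindex_onto (fun u => patch A u z) (fun v => patch A v x)) /=.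
  apply: eq_big => u.
    rewrite patchK; apply/eqonP/andP => [H|[/eqonP H1 /eqP H2] s nT].
      split; first by apply/eqonP => s nT; rewrite !patchE; case: ifP => // _; apply: H.
      apply/eqP/ffunP => s; rewrite patchE; case: ifP => // As; apply/esym/H/CA.
      by rewrite inE As.
    case As: (s \in A); first by have := H1 s nT; rewrite !patchE As.
    by rewrite -{1}H2 patchE As.
  move=> /eqonP Hu; rewrite (sY _ _ z) (_ : eqon _ _ _ = true) ?mul1r.
    congr (Y _ _); apply/ffunP => s; rewrite !patchE.
    by case: (s \in T).
  apply/eqonP => s nA; rewrite patchE; move: (CA s nA); rewrite inE => /negbTE ->.
  by rewrite Hu ?CA // Hxy.
move=> v /eqonP Hv; rewrite patchK; apply/ffunP => s; rewrite !patchE.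
case: ifP => // As; rewrite Hv ?patchE ?As //; apply: CA; by rewrite inE As.
Qed.

End PartialTrace.

Section TraceEmbedding.
Variables (K : fieldType) (d : nat) (S' S G : finType).
Variables (g : S' -> S) (k : S -> G) (T : {set G}).
Local Notation config := (config d).
Hypotheses (k_inj : injective k) (kT : forall s, (k s \in T) = (s \notin codom g)).
Hypothesis T_sub : T \subset codomset k.

Lemma patch_glue (w y : config G) :
  [ffun i => patch T w y (k i)] = glue g [ffun i => w (k i)] [ffun i => y (k (g i))].
Proof.
apply/ffunP => s; rewrite !ffunE kT.
case: pickP => [s' /eqP <-|H]; first by rewrite codom_f /= ffunE.
by case: ifP => // /negbFE /codomP [s' Es]; move: (H s'); rewrite Es eqxx.
Qed.

Lemma eqon_trace_set (w x : config G) : eqon (~: T) w x =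
  eqon (~: codomset k) w x && [forall s', [ffun i => w (k i)] (g s') == x (k (g s'))].
Proof.
have TC : {subset ~: codomset k <= ~: T} by apply/subsetP; rewrite setCS.
apply/eqonP/andP => [H|[/eqonP H1 /forallP H2] t].
  split; first by apply/eqonP => t /TC /H.
  by apply/forallP => s'; rewrite ffunE; apply/eqP/H; rewrite inE kT codom_f.
rewrite inE => Ht; case: (boolP (t \in codomset k)) => Hk; last by apply: H1; rewrite inE.
case/codomsetP: Hk Ht => s ->; rewrite kT negbK => /codomP [s' ->].
by move: (H2 s'); rewrite ffunE => /eqP.
Qed.

Lemma eqon_codomset_comp (x y : config G) :
  eqon (~: codomset (k \o g)) x y = eqon T x y && eqon (~: codomset k) x y.
Proof.
apply/eqonP/andP => [H|[/eqonP H1 /eqonP H2] t Ht].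
  split; apply/eqonP => t Ht; apply: H.
    have /codomsetP [s Es] := subsetP T_sub t Ht; subst t.
    move: Ht; rewrite kT inE => Hs; apply/negP; case/codomsetP => s' /= /k_inj Es'.
    by move: Hs; rewrite Es' codom_f.
  move: Ht; rewrite !inE; apply: contra => /codomP [s' ->].
  exact: (codom_f k (g s')).
case: (boolP (t \in T)) => HtT; first exact: H1.
case: (boolP (t \in codomset k)) => Hk; last by apply: H2; rewrite inE.
case/codomsetP: Hk HtT => s Et; subst t; rewrite kT negbK => /codomP [s' Es'].
by move: Ht; rewrite inE Es' => /negP; case; apply: (codomset_f (k \o g)).
Qed.

Lemma ptrace_emb (X : Op K d S) :
  emb (k \o g) (ptrace g X) = trace_on T (emb k X).
Proof.
apply: op_ext => x y; rewrite embE /ptrace /trace_on eqon_codomset_comp.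
have TC : {subset ~: codomset k <= ~: T} by apply/subsetP; rewrite setCS.
have Eb w : eqon (~: T) w x ->
    eqon (~: codomset k) w (patch T w y) = eqon (~: codomset k) x y.
  move=> /eqonP Hw; apply/eqonP/eqonP => H t Ht; move: (H t Ht);
  by rewrite patchE; move: (TC t Ht); rewrite inE => /negbTE ->; rewrite Hw ?TC.
rewrite -mulnb natrM mulrCA; congr (_ * _).
under [RHS]eq_bigr => w Hw do rewrite embE patch_glue (Eb w Hw).
rewrite (eq_bigl _ _ (eqon_trace_set ^~ x)) big_mkcondr /= sum_eqon_extend //.
rewrite big_distrl big_mkcond /=; apply: eq_bigr => u _; rewrite extendK //.
by rewrite (eq_forallb (fun s' => congr1 (eq_op _) (ffunE _ s'))).
Qed.

End TraceEmbedding.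

Section SumEq.
Variables (A B : eqType) (a a' : A) (b b' : B).
Lemma inl_eqE : (inl a == inl a' :> A + B) = (a == a').
Proof. by apply/eqP/eqP => [[]|->]. Qed.
Lemma inr_eqE : (inr b == inr b' :> A + B) = (b == b').
Proof. by apply/eqP/eqP => [[]|->]. Qed.
Lemma inlr_eqF : (inl a == inr b :> A + B) = false.
Proof. by []. Qed.
Lemma inrl_eqF : (inr b == inl a :> A + B) = false.
Proof. by []. Qed.
End SumEq.
Definition sum_eqE := (inl_eqE, inr_eqE, inlr_eqF, inrl_eqF).

Lemma ord_gtn_neq n (i j : 'I_n) : (i < j)%N -> j != i.
Proof. by move=> ij; rewrite -val_eqE gtn_eqF. Qed.

Lemma Zp2_natr_double n : ((2 * n)%N%:R : 'Z_2) = 0.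
Proof. by rewrite natrM (_ : (2%:R : 'Z_2) = 0) ?mul0r //; apply/val_inj. Qed.

(* The planes 1_l, 2_m, 3, 4; the space V_(ab) is labelled by the link (a, b). *)
Section Planes.
Variables (L M : nat).

Definition plane := ('I_(2 * L) + 'I_(2 * M) + bool)%type.
Definition link := (plane * plane)%type.
Definition p1 l : plane := inl (inl l).
Definition p2 m : plane := inl (inr m).
Definition p3 : plane := inr false.
Definition p4 : plane := inr true.
Definition isP1 (p : plane) : bool := if p is inl (inl _) then true else false.

Definition triple (u v w : link) (i : 'I_3) : link :=
  if i == 0 :> nat then u else if i == 1 :> nat then v else w.

(* boldR for the planes a < b acts on the V_(1_l a), V_(1_l b) and traces
   out V_(ab). *)
Definition boldR_link (a b : plane) (lb : 'I_(2 * L) * bool) : link :=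
  (p1 lb.1, if lb.2 then b else a).
Definition boldR_trace_link (a b : plane) (o : option ('I_(2 * L) * bool)) : link :=
  if o is Some lb then boldR_link a b lb else (a, b).

Definition layer_link (lm : 'I_(2 * L) * 'I_(2 * M)) : link := (p1 lm.1, p2 lm.2).
Definition layer_trace_link (c : plane) s : link :=
  match s with inl lm => layer_link lm | inr l => (p1 l, c) end.

Definition tetra_link (q1 q2 q3 q4 : plane) (i : 'I_6) : link :=
  nth (q3, q4) [:: (q1, q2); (q1, q3); (q1, q4); (q2, q3); (q2, q4)] i.

Definition links_to (c : plane) : {set link} := [set t | isP1 t.1 && (t.2 == c)].

Lemma boldR_trace_link_trlab a b l :
  boldR_trace_link a b \o trlab l =1 triple (p1 l, a) (p1 l, b) (a, b).
Proof. by move=> i; rewrite /= /trlab /triple; case: ifP => //; case: ifP. Qed.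

Lemma layer_trace_link_tlab c m :
  layer_trace_link c \o @tlab L M m =1 boldR_link (p2 m) c.
Proof. by move=> [l b]; rewrite /tlab /=; case: b. Qed.

Lemma tetra_link_f123 q1 q2 q3 q4 :
  tetra_link q1 q2 q3 q4 \o f123 =1 triple (q1, q2) (q1, q3) (q2, q3).
Proof. by move=> [[|[|[|n]]] Hi] //=; rewrite /f123 /lab /tetra_link /= inordK. Qed.
Lemma tetra_link_f124 q1 q2 q3 q4 :
  tetra_link q1 q2 q3 q4 \o f124 =1 triple (q1, q2) (q1, q4) (q2, q4).
Proof. by move=> [[|[|[|n]]] Hi] //=; rewrite /f124 /lab /tetra_link /= inordK. Qed.
Lemma tetra_link_f134 q1 q2 q3 q4 :
  tetra_link q1 q2 q3 q4 \o f134 =1 triple (q1, q3) (q1, q4) (q3, q4).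
Proof. by move=> [[|[|[|n]]] Hi] //=; rewrite /f134 /lab /tetra_link /= inordK. Qed.
Lemma tetra_link_f234 q1 q2 q3 q4 :
  tetra_link q1 q2 q3 q4 \o f234 =1 triple (q2, q3) (q2, q4) (q3, q4).
Proof. by move=> [[|[|[|n]]] Hi] //=; rewrite /f234 /lab /tetra_link /= inordK. Qed.

Lemma boldR_link_inj a b : a != b -> injective (boldR_link a b).
Proof.
move=> ab [l x] [l' y]; rewrite /boldR_link /= => [[El Eb]]; case: El => ->.
by case: x y Eb => [] [] // E; move: ab; rewrite E eqxx.
Qed.

Lemma boldR_trace_link_inj a b : a != b -> ~~ isP1 a -> injective (boldR_trace_link a b).
Proof.
move=> ab na [x|] [y|] //=.
- by move/(boldR_link_inj ab) ->.
- by case: x => l u [] El _; move: na; rewrite -El.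
- by case: y => l u [] El _; move: na; rewrite El.
Qed.

Lemma layer_link_inj : injective layer_link.
Proof. by move=> [l m] [l' m'] [-> ->]. Qed.

Lemma layer_trace_link_inj c : (forall m, c != p2 m) -> injective (layer_trace_link c).
Proof.
move=> hc [[l m]|l] [[l' m']|l'] //=; rewrite /layer_link /=.
- by case=> -> ->.
- by case=> _ E; move: (hc m); rewrite -E eqxx.
- by case=> _ E; move: (hc m'); rewrite E eqxx.
- by case=> ->.
Qed.

Lemma tetra_link_inj l m : injective (tetra_link (p1 l) (p2 m) p3 p4).
Proof.
move=> [[|[|[|[|[|[|i]]]]]] Hi] [[|[|[|[|[|[|j]]]]]] Hj] //; rewrite /tetra_link /= => E;
  first [exact: val_inj | by case: E].
Qed.

Lemma triple_inj (u v w : link) : u != v -> u != w -> v != w -> injective (triple u v w).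
Proof.
move=> uv uw vw [[|[|[|i]]] Hi] [[|[|[|j]]] Hj] //; rewrite /triple /= => E;
  first [exact: val_inj | by move: uv uw vw; rewrite E eqxx ?andbF].
Qed.

End Planes.

Arguments p1 {L M} l.
Arguments p2 {L M} m.
Arguments p3 {L M}.
Arguments p4 {L M}.
Arguments isP1 {L M} p.
Arguments triple {L M} u v w i.
Arguments boldR_link {L M} a b lb.
Arguments boldR_trace_link {L M} a b o.
Arguments layer_link {L M} lm.
Arguments layer_trace_link {L M} c s.
Arguments tetra_link {L M} q1 q2 q3 q4 i.
Arguments links_to {L M} c.

Ltac plane_simpl :=
  rewrite /p1 /p2 /p3 /p4 ?xpair_eqE ?sum_eqE ?eqxx ?andbF ?andbT ?andFb ?andTb /=.

Section Triangles.
Variables (K : fieldType) (d : nat) (L M : nat).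
Local Notation plane := (plane L M).
Local Notation link := (link L M).
Local Notation "X ** Y" := (@opmul K d link X Y) (at level 40, left associativity).

Definition at3 (a b c : plane) (X : Op K d 'I_3) : Op K d link :=
  emb (triple (a, b) (a, c) (b, c)) X.

Lemma supported_at3 (A : {set link}) a b c X :
  (a, b) \in A -> (a, c) \in A -> (b, c) \in A -> supported A (at3 a b c X).
Proof.
move=> hab hac hbc; apply: supported_emb => i; rewrite /triple.
by case: ifP => _ //; case: ifP.
Qed.

Lemma at3_invertible a b c X : a != b -> b != c -> a != c ->
  opinvertible X -> opinvertible (at3 a b c X).
Proof.
move=> ab bc ac; apply: emb_invertible; apply: triple_inj; rewrite xpair_eqE negb_and.
- by rewrite eqxx bc orbT.
- by rewrite ab.
- by rewrite ab.
Qed.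

Lemma commute_at3_p1 (l l' : 'I_(2 * L)) (a b a' b' : plane) X Y :
  l != l' -> (a, b) != (a', b') -> ~~ isP1 a -> ~~ isP1 a' ->
  at3 (p1 l) a b X ** at3 (p1 l') a' b' Y = at3 (p1 l') a' b' Y ** at3 (p1 l) a b X.
Proof.
move=> ll' ab' na na'.
apply: (commute_supported (A := [set (p1 l, a); (p1 l, b); (a, b)])
                          (B := [set (p1 l', a'); (p1 l', b'); (a', b')])).
- by apply: supported_at3; rewrite !inE eqxx ?orbT.
- by apply: supported_at3; rewrite !inE eqxx ?orbT.
have ne_p1 (k : 'I_(2 * L)) (p : plane) : ~~ isP1 p -> (p1 k == p) = false.
  by move=> np; apply: contraNF np => /eqP <-.
have p1_ll' : (p1 l == p1 l' :> plane) = false by rewrite /p1 !sum_eqE (negbTE ll').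
move=> t; rewrite !inE -!orbA => /or3P [] /eqP ->; rewrite !xpair_eqE.
- by rewrite p1_ll' ne_p1.
- by rewrite p1_ll' ne_p1.
- by rewrite [a == _]eq_sym ne_p1 //= -xpair_eqE.
Qed.

Lemma commute_boldR_link (a b c e : plane) (X Y : Op K d ('I_(2 * L) * bool)%type) :
  a != c -> a != e -> b != c -> b != e ->
  emb (boldR_link a b) X ** emb (boldR_link c e) Y =
  emb (boldR_link c e) Y ** emb (boldR_link a b) X.
Proof.
move=> ac ae bc be.
apply: (commute_supported (A := [set t : link | (t.2 == a) || (t.2 == b)])
                          (B := [set t : link | (t.2 == c) || (t.2 == e)])).
- by apply: supported_emb => [[l []]]; rewrite inE /boldR_link /= eqxx ?orbT.
- by apply: supported_emb => [[l []]]; rewrite inE /boldR_link /= eqxx ?orbT.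
by move=> t; rewrite !inE negb_or => /orP [] /eqP ->; apply/andP.
Qed.

End Triangles.

Ltac links_subset :=
  apply/subsetP => t; rewrite !inE; do ?case/orP; move/eqP->; plane_simpl.

Section Reduction.
Variables (K : fieldType) (d : nat) (C : Type) (L M : nat).
Variables (R R1 R2 R3 : RMap K d C) (r1 : 'I_(2 * L) -> C) (r2 : 'I_(2 * M) -> C).
Local Notation plane := (plane L M).
Local Notation link := (link L M).
Local Notation "X ** Y" := (@opmul K d link X Y) (at level 40, left associativity).

Lemma boldR_trace_on (X : RMap K d C) (a b : plane) s ra rb :
  a != b -> ~~ isP1 a ->
  emb (boldR_link a b) (boldR r1 X s ra rb) =
  trace_on [set (a, b)] (opprod (fun l => at3 (p1 l) a b (X (s + l.+1%:R) (r1 l) ra rb))).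
Proof.
move=> ab na; have kI := boldR_trace_link_inj ab na.
rewrite (_ : boldR_link a b = boldR_trace_link a b \o Some) //.
rewrite /boldR (ptrace_emb (T := [set (a, b)]) kI); last 2 first.
- move=> [[l u]|]; rewrite inE; last by rewrite eqxx; apply/esym/negP => /codomP [? []].
  rewrite codom_f /= /boldR_link xpair_eqE; apply/negbTE; apply/negP => /andP [/eqP E _].
  by move: na; rewrite -E.
- by apply/subsetP => t; rewrite inE => /eqP ->; apply/codomsetP; exists None.
rewrite emb_prod //; congr trace_on; congr opprod; apply: functional_extensionality => l.
by rewrite emb_comp // (eq_emb _ (boldR_trace_link_trlab a b l)).
Qed.

Lemma Tlayer_trace_on (X : RMap K d C) (c : plane) sigma r :
  (forall m, c != p2 m) -> ~~ isP1 c ->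
  emb layer_link (Tlayer r1 r2 X sigma r) =
  trace_on (links_to c) (opprod (fun m =>
    emb (boldR_link (p2 m) c) (boldR r1 X (sigma + m.+1%:R) (r2 m) r))).
Proof.
move=> hc hc1; have kI := layer_trace_link_inj hc.
rewrite (_ : layer_link = layer_trace_link c \o inl) //.
rewrite /Tlayer (ptrace_emb (T := links_to c) kI); last 2 first.
- move=> [[l m]|l]; rewrite inE; last first.
    by rewrite /= eqxx; apply/esym/negP => /codomP [? []].
  by rewrite codom_f /= eq_sym (negbTE (hc m)).
- apply/subsetP => [[t1 t2]]; rewrite inE /= => /andP [H1 /eqP ->].
  by case: t1 H1 => [[l|m]|bb] // _; apply/codomsetP; exists (inr l).
rewrite emb_prod //; congr trace_on; congr opprod; apply: functional_extensionality => m.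
by rewrite emb_comp // (eq_emb _ (layer_trace_link_tlab c m)).
Qed.

Lemma BTE_at3 tau l m ra rb rc : BTE R R1 R2 R3 tau ->
  at3 (p1 l) (p2 m) p3 (R tau (r1 l) ra rb)
  ** at3 (p1 l) (p2 m) p4 (R1 (tau + 1) (r1 l) ra rc)
  ** at3 (p1 l) p3 p4 (R2 tau (r1 l) rb rc)
  ** at3 (p2 m) p3 p4 (R3 (tau + 1) ra rb rc)
  = at3 (p2 m) p3 p4 (R3 tau ra rb rc)
  ** at3 (p1 l) p3 p4 (R2 (tau + 1) (r1 l) rb rc)
  ** at3 (p1 l) (p2 m) p4 (R1 tau (r1 l) ra rc)
  ** at3 (p1 l) (p2 m) p3 (R (tau + 1) (r1 l) ra rb).
Proof.
move=> /(_ (r1 l) ra rb rc) /(congr1 (emb (tetra_link (p1 l) (p2 m) p3 p4))).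
have tI := @tetra_link_inj L M l m.
rewrite !embM // !emb_comp // !(eq_emb _ (tetra_link_f123 _ _ _ _)).
by rewrite !(eq_emb _ (tetra_link_f124 _ _ _ _)) !(eq_emb _ (tetra_link_f134 _ _ _ _))
  !(eq_emb _ (tetra_link_f234 _ _ _ _)).
Qed.

Hypothesis BTE_R : forall sigma, BTE R R1 R2 R3 sigma.
Hypothesis R3_invertible : forall sigma a b c, opinvertible (R3 sigma a b c).

Lemma boldR_YBE m s ra rb rc :
  emb (boldR_link (p2 m) p3) (boldR r1 R s ra rb)
  ** emb (boldR_link (p2 m) p4) (boldR r1 R1 (s + 1) ra rc)
  ** emb (boldR_link p3 p4) (boldR r1 R2 s rb rc)
  = emb (boldR_link p3 p4) (boldR r1 R2 (s + 1) rb rc)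
  ** emb (boldR_link (p2 m) p4) (boldR r1 R1 s ra rc)
  ** emb (boldR_link (p2 m) p3) (boldR r1 R (s + 1) ra rb).
Proof.
have ab : p2 m != p3 :> plane by plane_simpl.
have ac : p2 m != p4 :> plane by plane_simpl.
have bc : p3 != p4 :> plane by plane_simpl.
rewrite !boldR_trace_on //.
rewrite !trace_on_prodM //; last first.
all: try first
  [ by links_subset
  | by move=> i; do ?apply: supportedM; apply: supported_at3; rewrite !inE; plane_simpl
  | by apply: supported_trace_on;
       [links_subset | apply: supported_prod => i; apply: supported_at3; rewrite !inE; plane_simpl]
  | by move=> i j /ord_gtn_neq ji; do ?apply: commute_mulop;
       apply: commute_at3_p1 => //; plane_simpl ].
rewrite [in RHS](_ : [set (p3, p4); (p2 m, p4); (p2 m, p3)] =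
                  [set (p2 m, p3); (p2 m, p4); (p3, p4)]); last first.
  by apply/setP => t; rewrite !inE; do 3 case: (t == _).
apply: (trace_on_conj (D := fun k => at3 (p2 m) p3 p4 (R3 (s + k.+1%:R) ra rb rc))).
- move=> l /=; have E1 : s + 1 + l.+1%:R = s + l.+1%:R + 1 by rewrite addrAC.
  have E2 : s + l.+2%:R = s + l.+1%:R + 1 by rewrite -addrA natr1.
  by rewrite E1 E2 !mulopA; apply: BTE_at3.
- by rewrite /= -natr1 Zp2_natr_double add0r.
- by apply: supported_at3; rewrite !inE eqxx ?orbT.
- exact: at3_invertible.
Qed.

Hypothesis boldR_R2_invertible : forall sigma ra rb, opinvertible (boldR r1 R2 sigma ra rb).

Lemma layer_commute sigma r r' :
  emb layer_link (opmul (Tlayer r1 r2 R sigma r) (Tlayer r1 r2 R1 (sigma + 1) r')) =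
  emb layer_link (opmul (Tlayer r1 r2 R1 sigma r') (Tlayer r1 r2 R (sigma + 1) r)).
Proof.
have h3 m : p3 != p2 m :> plane by plane_simpl.
have h4 m : p4 != p2 m :> plane by plane_simpl.
rewrite !(embM _ _ (@layer_link_inj L M)).
rewrite !(Tlayer_trace_on R _ _ h3 isT) !(Tlayer_trace_on R1 _ _ h4 isT).
have links_to_subset c c' : c != c' -> links_to c \subset ~: links_to c'.
  by move=> cc'; apply/subsetP => t; rewrite !inE => /andP [-> /eqP ->].
have supported_boldR_link c c' a (X : Op K d ('I_(2 * L) * bool)%type) :
    c != a -> c != c' -> supported (~: links_to c) (emb (boldR_link a c') X).
  by move=> ca cc'; apply: supported_emb => -[l []]; rewrite !inE /= eq_sym.
rewrite !trace_on_prodM //; last first.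
all: try first
  [ by apply: links_to_subset; plane_simpl
  | by move=> m; apply: supported_boldR_link; plane_simpl
  | by apply: supported_trace_on;
       [ apply: links_to_subset | apply: supported_prod => m; apply: supported_boldR_link ];
       plane_simpl
  | by move=> i j /ord_gtn_neq ji; apply: commute_boldR_link; plane_simpl ].
rewrite [links_to p4 :|: _]setUC.
apply: (trace_on_conj (D := fun k => emb (boldR_link p3 p4) (boldR r1 R2 (sigma + k%:R) r r'))).
- move=> m /=; have E : sigma + m%:R = sigma + m.+1%:R + 1.
    by rewrite -natr1 -!addrA (_ : 1 + 1 = 0 :> 'Z_2) ?addr0 //; apply/val_inj.
  by rewrite E (addrAC sigma 1) !mulopA; apply: boldR_YBE.
- by rewrite /= Zp2_natr_double.
- by apply: supported_emb => -[l []]; rewrite !inE /= ?eqxx ?orbT.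
- by apply: emb_invertible; [apply: boldR_link_inj; plane_simpl | apply: boldR_R2_invertible].
Qed.

End Reduction.

Theorem mainTheorem2 (Rr : realType) (d : nat) (C : Type) (L M : nat)
  (hL : (1 <= L)%N) (hM : (1 <= M)%N)
  (R R1 R2 R3 : RMap Rr[i] d C)
  (r1 : 'I_(2 * L) -> C) (r2 : 'I_(2 * M) -> C) :
  (forall sigma : 'Z_2, BTE R R1 R2 R3 sigma) ->
  (forall (sigma : 'Z_2) (a b c : C), opinvertible (R3 sigma a b c)) ->
  (forall (sigma : 'Z_2) (ra rb : C), opinvertible (boldR r1 R2 sigma ra rb)) ->
  forall (sigma : 'Z_2) (r r' : C),
    opmul (Tlayer r1 r2 R sigma r) (Tlayer r1 r2 R1 (sigma + 1) r')
    = opmul (Tlayer r1 r2 R1 sigma r') (Tlayer r1 r2 R (sigma + 1) r).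
Proof.
move=> BTE_R R3_invertible boldR_R2_invertible sigma r r'.
have l0 : (0 < 2 * L)%N by rewrite muln_gt0.
have m0 : (0 < 2 * M)%N by rewrite muln_gt0.
apply: (emb_inj (Ordinal l0, Ordinal m0) (@layer_link_inj L M)).
exact: layer_commute.
Qed.
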